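(* Let $X\subseteq S^1$ and $0<r\le r'<\frac12$. The (non-continuous) map $\eta:S^1\to S^1$, $\eta(y)=\frac{1+2r}{1+2r'}\,y$ for $y\in[0,1)$, maps $T_r(X)$ into $T_{r'}(X)$ and determines a simplicial map $$\eta:\mathbf{VR}_{\le}\Big(T_r(X);\tfrac{2r}{1+2r}\Big)\to\mathbf{VR}_{\le}\Big(T_{r'}(X);\tfrac{2r'}{1+2r'}\Big)$$ such that $\pi_{r'}\circ\eta=\pi_r$; that is, the square formed by $\eta$, the simplicial homotopy equivalences $\pi_r:\mathbf{VR}_{\le}(T_r(X);\frac{2r}{1+2r})\to\check{\mathbf C}_{\le}(X;r)$ and $\pi_{r'}:\mathbf{VR}_{\le}(T_{r'}(X);\frac{2r'}{1+2r'})\to\check{\mathbf C}_{\le}(X;r')$, and the inclusion $\check{\mathbf C}_{\le}(X;r)\subseteq\check{\mathbf C}_{\le}(X;r')$ commutes.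
   Context: $S^1$ is the circle of circumference $1$ with arc-length metric; points are identified with numbers in $[0,1)$, and $aX+b=\{(ax+b)\bmod1:x\in X\}$. For $0<s<\frac12$, $T_s(X)=\frac{1}{1+2s}X\cup\big(\frac{1}{1+2s}(X\cap[0,2s)_{S^1})+\frac{1}{1+2s}\big)$ and $\pi_s(y)=(1+2s)y\bmod 1$ for $y\in[0,1)$; $\pi_s$ induces a simplicial homotopy equivalence $\mathbf{VR}_{\le}(T_s(X);\frac{2s}{1+2s})\to\check{\mathbf C}_{\le}(X;s)$. $\mathbf{VR}_{\le}(Y;t)$ is the Vietoris–Rips complex on $Y$ (faces: finite subsets of diameter $\le t$), and $\check{\mathbf C}_{\le}(X;s)$ is the Čech complex on $X$ (faces: finite subsets contained in some closed arc of length $2s$, i.e. whose closed $s$-balls in $S^1$ have a common point). *)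

From Stdlib Require Import Reals Lra List.
Open Scope R_scope.

(* x mod 1, in [0,1).  Int_part x = floor x. *)
Definition mod1 (x : R) : R := x - IZR (Int_part x).

Definition onS1 (x : R) : Prop := 0 <= x < 1.

(* Arc-length distance on the circle of circumference 1 (for points in [0,1)). *)
Definition circ_dist (x y : R) : R := Rmin (Rabs (x - y)) (1 - Rabs (x - y)).

Definition affS1 (a b : R) (X : R -> Prop) : R -> Prop :=
  fun z => exists x, X x /\ z = mod1 (a * x + b).

(* X ∩ [0, 2s)_{S^1}  (for 0 < s < 1/2 the arc [0,2s) is {x in [0,1) | x < 2s}) *)
Definition cap_arc (s : R) (X : R -> Prop) : R -> Prop :=
  fun x => X x /\ 0 <= x < 2 * s.

Definition Tset (s : R) (X : R -> Prop) : R -> Prop :=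
  fun y => affS1 (1 / (1 + 2 * s)) 0 X y
        \/ affS1 (1 / (1 + 2 * s)) (1 / (1 + 2 * s)) (cap_arc s X) y.

Definition pi_s (s y : R) : R := mod1 ((1 + 2 * s) * y).

Definition eta (r r' y : R) : R := (1 + 2 * r) / (1 + 2 * r') * y.

Definition VR_face (Y : R -> Prop) (t : R) (sigma : list R) : Prop :=
  sigma <> nil /\ (forall x, In x sigma -> Y x) /\
  (forall x y, In x sigma -> In y sigma -> circ_dist x y <= t).

Definition Cech_face (X : R -> Prop) (s : R) (sigma : list R) : Prop :=
  sigma <> nil /\ (forall x, In x sigma -> X x) /\
  (exists c, onS1 c /\ forall x, In x sigma -> circ_dist x c <= s).

From Stdlib Require Import Reals Lra List.
Open Scope R_scope.

(* Every point of T_s(X) is u/(1+2s) with 0 <= u < 1+2s, so no reduction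
   mod 1 occurs and eta just turns u/(1+2r) into u/(1+2r').  A circular
   distance is at most t iff the linear distance d has d <= t or d >= 1-t;
   for t = 2s/(1+2s) this reads (1+2s) d <= 2s or (1+2s) d >= 1.  Since
   (1+2r') |eta y - eta z| = (1+2r) |y - z|, both alternatives pass from r to
   r' >= r.  Finally pi_{r'} o eta and pi_r are the same map y |-> (1+2r) y
   mod 1. *)

Lemma mod1_id z : onS1 z -> mod1 z = z.
Proof.
intros Hz; unfold onS1, mod1 in *.
rewrite <- (Int_part_spec z 0) by (simpl; lra).
simpl; lra.
Qed.

Lemma onS1_div A u : 0 <= u < A -> onS1 (u / A).
Proof.
intros Hu; unfold onS1; split.
- apply Rmult_le_pos; [lra | left; apply Rinv_0_lt_compat; lra].
- apply (Rmult_lt_reg_r A); [lra|].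
  replace (u / A * A) with u by (field; lra); lra.
Qed.

Lemma eta_div r r' u : 0 < 1 + 2 * r -> 0 < 1 + 2 * r' ->
  eta r r' (u / (1 + 2 * r)) = u / (1 + 2 * r').
Proof. intros Hr Hr'; unfold eta; field; lra. Qed.

Lemma Tset_eta X r r' : (forall x, X x -> onS1 x) ->
  0 < r -> r <= r' -> r' < 1 / 2 ->
  forall y, Tset r X y -> Tset r' X (eta r r' y).
Proof.
intros HX Hr Hrr' Hr' y [[x [Hx ->]] | [x [[Hx Hx2] ->]]];
  destruct (HX x Hx) as [Hx0 Hx1].
- left; exists x; split; [exact Hx|].
  replace (1 / (1 + 2 * r) * x + 0) with (x / (1 + 2 * r)) by (field; lra).
  replace (1 / (1 + 2 * r') * x + 0) with (x / (1 + 2 * r')) by (field; lra).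
  rewrite !mod1_id by (apply onS1_div; lra).
  apply eta_div; lra.
- right; exists x; split; [split; [exact Hx | lra]|].
  replace (1 / (1 + 2 * r) * x + 1 / (1 + 2 * r))
    with ((x + 1) / (1 + 2 * r)) by (field; lra).
  replace (1 / (1 + 2 * r') * x + 1 / (1 + 2 * r'))
    with ((x + 1) / (1 + 2 * r')) by (field; lra).
  rewrite !mod1_id by (apply onS1_div; lra).
  apply eta_div; lra.
Qed.

Lemma circ_dist_le_iff x y t :
  circ_dist x y <= t <-> Rabs (x - y) <= t \/ 1 - t <= Rabs (x - y).
Proof.
unfold circ_dist, Rmin; destruct (Rle_dec _ _); split; intros H; lra.
Qed.

Lemma eta_dist r r' y z : 0 < 1 + 2 * r -> 0 < 1 + 2 * r' ->
  Rabs (eta r r' y - eta r r' z) = (1 + 2 * r) / (1 + 2 * r') * Rabs (y - z).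
Proof.
intros Hr Hr'; unfold eta.
rewrite <- Rmult_minus_distr_l, Rabs_mult, Rabs_right; [reflexivity|].
apply Rle_ge, Rmult_le_pos; [lra | left; apply Rinv_0_lt_compat; lra].
Qed.

Lemma eta_circ_dist_le r r' y z : 0 < r -> r <= r' ->
  circ_dist y z <= 2 * r / (1 + 2 * r) ->
  circ_dist (eta r r' y) (eta r r' z) <= 2 * r' / (1 + 2 * r').
Proof.
intros Hr Hrr'; rewrite !circ_dist_le_iff, eta_dist by lra.
set (d := Rabs (y - z)).
assert (Hd : 0 <= d) by apply Rabs_pos.
intros [Hnear | Hfar]; [left | right].
- apply (Rmult_le_compat_l (1 + 2 * r)) in Hnear; [|lra].
  apply (Rmult_le_reg_l (1 + 2 * r')); [lra|].
  replace ((1 + 2 * r') * ((1 + 2 * r) / (1 + 2 * r') * d))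
    with ((1 + 2 * r) * d) by (field; lra).
  replace ((1 + 2 * r) * (2 * r / (1 + 2 * r))) with (2 * r) in Hnear
    by (field; lra).
  replace ((1 + 2 * r') * (2 * r' / (1 + 2 * r'))) with (2 * r')
    by (field; lra).
  lra.
- apply (Rmult_le_compat_l (1 + 2 * r)) in Hfar; [|lra].
  apply (Rmult_le_reg_l (1 + 2 * r')); [lra|].
  replace ((1 + 2 * r') * ((1 + 2 * r) / (1 + 2 * r') * d))
    with ((1 + 2 * r) * d) by (field; lra).
  replace ((1 + 2 * r) * (1 - 2 * r / (1 + 2 * r))) with 1 in Hfar
    by (field; lra).
  replace ((1 + 2 * r') * (1 - 2 * r' / (1 + 2 * r'))) with 1
    by (field; lra).
  lra.
Qed.

Lemma VR_face_map_eta X r r' sigma : (forall x, X x -> onS1 x) ->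
  0 < r -> r <= r' -> r' < 1 / 2 ->
  VR_face (Tset r X) (2 * r / (1 + 2 * r)) sigma ->
  VR_face (Tset r' X) (2 * r' / (1 + 2 * r')) (map (eta r r') sigma).
Proof.
intros HX Hr Hrr' Hr' [Hne [Hin Hdiam]]; split; [|split].
- destruct sigma; [contradiction | discriminate].
- intros z Hz; apply in_map_iff in Hz as [y [<- Hy]].
  apply Tset_eta; auto.
- intros z w Hz Hw.
  apply in_map_iff in Hz as [y [<- Hy]].
  apply in_map_iff in Hw as [v [<- Hv]].
  apply eta_circ_dist_le; auto.
Qed.

Lemma Cech_face_mono X s s' sigma : s <= s' ->
  Cech_face X s sigma -> Cech_face X s' sigma.
Proof.
intros Hss' [Hne [Hin [c [Hc Hball]]]]; split; [|split]; auto.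
exists c; split; [exact Hc|].
intros x Hx; specialize (Hball x Hx); lra.
Qed.

Lemma pi_s_eta r r' y : 0 < 1 + 2 * r' -> pi_s r' (eta r r' y) = pi_s r y.
Proof. intros Hr'; unfold pi_s, eta; f_equal; field; lra. Qed.

Theorem proposition9p5 (X : R -> Prop) (r r' : R) :
  (forall x, X x -> onS1 x) ->
  0 < r -> r <= r' -> r' < 1 / 2 ->
  (* eta maps T_r(X) into T_{r'}(X) *)
  (forall y, Tset r X y -> Tset r' X (eta r r' y)) /\
  (* eta is simplicial VR(T_r X; 2r/(1+2r)) -> VR(T_{r'} X; 2r'/(1+2r')) *)
  (forall sigma, VR_face (Tset r X) (2 * r / (1 + 2 * r)) sigma ->
     VR_face (Tset r' X) (2 * r' / (1 + 2 * r')) (map (eta r r') sigma)) /\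
  (* the inclusion Cech(X;r) ⊆ Cech(X;r') *)
  (forall sigma, Cech_face X r sigma -> Cech_face X r' sigma) /\
  (* the square commutes: pi_{r'} o eta = pi_r on T_r(X) *)
  (forall y, Tset r X y -> pi_s r' (eta r r' y) = pi_s r y).
Proof.
intros HX Hr Hrr' Hr'.
split; [|split; [|split]].
- exact (Tset_eta X r r' HX Hr Hrr' Hr').
- intros sigma; exact (VR_face_map_eta X r r' sigma HX Hr Hrr' Hr').
- intros sigma; exact (Cech_face_mono X r r' sigma Hrr').
- intros y _; apply pi_s_eta; lra.
Qed.
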